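(* Let $G$ be a connected orientable ribbon graph with flags and $G^\ast$ its dual. Under the natural bijection between the edges of $G$ and of $G^\ast$, $$\Xi_G(\alpha,\beta,w)=\Xi_{G^\ast}(\beta,\alpha,w).$$
   Context: Orientable ribbon graph with flags: finite graph with distinctly labelled flags at the vertices and a cyclic order of half-edges and flags at each vertex, viewed as an oriented surface with boundary. For $A\subseteq E$, each boundary component of the spanning ribbon subgraph $(V,A)$, traversed with the induced orientation, meets flags in a cyclically ordered sequence $I$; variables $w_I$ are attached to all cyclically ordered subsets of flag labels (including the empty one). $\Xi_G(\alpha,\beta,w)=\sum_{A\subseteq E}\prod_{e\notin A}\alpha_e\prod_{e\in A}\beta_e\prod_{\text{boundary comps of }(V,A)}w_I$. The dual $G^\ast$: its vertices are the boundary components (faces) of $G$, each edge of $G$ gives one edge of $G^\ast$ joining the faces on its two sides, and the half-edges and flags (each flag of $G$ lying on exactly one face) are attached to the vertex of $G^\ast$ in the cyclic order in which they are met along the boundary of $G$ with its induced orientation. *)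

From HB Require Import structures.
From mathcomp Require Import all_boot all_order all_algebra all_fingroup.
Set Implicit Arguments. Unset Strict Implicit. Unset Printing Implicit Defensive.
Import GRing.Theory.

(* Darts of an orientable ribbon graph with flags, edge set E, flag labels L:
   each edge e has exactly two half-edges (e,true),(e,false); each label l
   is a (distinct) flag  inr l. *)
Notation dart E L := ((E * bool)%type + L)%type.

(* An orientable ribbon graph with flags, as a combinatorial map:
   [rho] is the rotation (cyclic order of half-edges and flags around each
   vertex); vertices carrying at least one dart are the cycles of [rho];
   [nbare] counts the vertices carrying no half-edge and no flag. *)
Record ribbon_graph (E L : finType) := RibbonGraph {
  rho : {perm dart E L};
  nbare : nat }.

Definition iotaA (E L : finType) (A : {set E}) (d : dart E L) : dart E L :=
  match d with
  | inl (e, b) => if e \in A then inl (e, ~~ b) else inl (e, b)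
  | inr l => inr l
  end.

Lemma iotaA_inv (E L : finType) (A : {set E}) : involutive (@iotaA E L A).
Proof.
by case=> [[e b]|l] //=; case: ifP => /= He; rewrite ?He ?negbK.
Qed.

Definition iota_perm (E L : finType) : {perm dart E L} :=
  perm (can_inj (@iotaA_inv E L setT)).

(* Boundary walk of the spanning ribbon subgraph (V,A): next dart met along
   the boundary, traversed with the induced orientation. *)
Definition face_step (E L : finType) (G : ribbon_graph E L) (A : {set E})
  (d : dart E L) : dart E L := rho G (iotaA A d).

Definition flags_of (E L : finType) (s : seq (dart E L)) : seq L :=
  pmap (fun d : dart E L => match d with inl _ => None | inr l => Some l end) s.

(* Boundary components of (V,A): one per orbit of [face_step G A]
   (represented by its root) plus one (with no flags) per bare vertex. *)
Definition Xi (E L : finType) (G : ribbon_graph E L) (R : comPzRingType)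
  (alpha beta : E -> R) (w : seq L -> R) : R :=
  \sum_(A : {set E})
     ((\prod_(e in ~: A) alpha e) * (\prod_(e in A) beta e) *
      (\prod_(d : dart E L | froot (face_step G A) d == d)
          w (flags_of (fingraph.orbit (face_step G A) d))) *
      w [::] ^+ nbare G)%R.

(* Dual ribbon graph: vertices = faces (boundary components) of G, with the
   half-edges and flags attached in the order met along the boundary;
   edge e of G gives edge e of G^* (same half-edges). Faces of G without
   darts are exactly the bare vertices of G. *)
Definition dual (E L : finType) (G : ribbon_graph E L) : ribbon_graph E L :=
  RibbonGraph (iota_perm E L * rho G)%g (nbare G).

Definition conn_rel (E L : finType) (G : ribbon_graph E L) : rel (dart E L) :=
  fun x y => (y == rho G x) || (y == iotaA setT x).

Definition connected (E L : finType) (G : ribbon_graph E L) : bool :=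
  if [exists d : dart E L, true]
  then (nbare G == 0%N) && [forall x, forall y, connect (conn_rel G) x y]
  else nbare G == 1%N.

From HB Require Import structures.
From mathcomp Require Import all_boot all_order all_algebra all_fingroup.
From Stdlib Require Import FunctionalExtensionality.

(* In the combinatorial-map model, the boundary walk of the spanning
   subgraph (V,A) is  d |-> rho (iota_A d),  where iota_A swaps the two
   half-edges of every edge of A.  The dual G^* has rotation
   rho^* = rho o iota_E, the face permutation of G.  Since iota_E o iota_A
   flips exactly the edges outside A, the boundary walk of (V^*,A) in G^*
   is the boundary walk of (V, E \ A) in G: the boundary components, and the
   flag sequences read along them, coincide.  Bare vertices are the same on
   both sides.  Hence the A-term of Xi_{G^*}(beta,alpha,w) equals the
   (E \ A)-term of Xi_G(alpha,beta,w), and reindexing the sum by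
   complementation proves the identity, for every ribbon graph. *)

Lemma iotaT_iotaA (E L : finType) (A : {set E}) (d : dart E L) :
  iotaA [set: E] (iotaA A d) = iotaA (~: A) d.
Proof.
case: d => [[e b]|l] //=; rewrite in_setC.
by case: (e \in A); rewrite /= in_setT ?negbK.
Qed.

Lemma face_step_dual (E L : finType) (G : ribbon_graph E L) (A : {set E}) :
  face_step (dual G) A = face_step G (~: A).
Proof.
apply: functional_extensionality => d.
by rewrite /face_step /dual /= permM /iota_perm permE iotaT_iotaA.
Qed.

Lemma Xi_dual (E L : finType) (G : ribbon_graph E L) (R : comPzRingType)
    (alpha beta : E -> R) (w : seq L -> R) :
  Xi (dual G) beta alpha w = Xi G alpha beta w.
Proof.
rewrite /Xi (reindex_inj (@setC_inj E)) /=.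
apply: eq_bigr => A _.
by rewrite face_step_dual setCK [(\prod_(e in ~: A) alpha e * _)%R]GRing.mulrC.
Qed.

Theorem proposition5p2 (E L : finType) (G : ribbon_graph E L)
  (R : comPzRingType) (alpha beta : E -> R) (w : seq L -> R) :
  connected G ->
  (forall (n : nat) (s : seq L), w (rot n s) = w s) ->
  Xi G alpha beta w = Xi (dual G) beta alpha w.
Proof. by move=> _ _; rewrite Xi_dual. Qed.
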